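(* Let $A\in\mathbb{C}^{m\times n}_r$ satisfy ${\rm rank}(AA^{\sim})={\rm rank}(A^{\sim}A)={\rm rank}(A)$ and be partitioned as $A=\left(\begin{array}{cc}A_1 & A_2\\ A_3 & A_4\end{array}\right)$, where $A_1\in\mathbb{C}^{r\times r}$ is nonsingular, $A_2\in\mathbb{C}^{r\times(n-r)}$, $A_3\in\mathbb{C}^{(m-r)\times r}$, $A_4\in\mathbb{C}^{(m-r)\times(n-r)}$. Then \[ A^{\mathfrak{m}}=\left(\begin{array}{cc}A_1 & A_2\end{array}\right)^{\sim}\left[\left(\begin{array}{c}A_1\\ A_3\end{array}\right)^{\sim}A\left(\begin{array}{cc}A_1 & A_2\end{array}\right)^{\sim}\right]^{-1}\left(\begin{array}{c}A_1\\ A_3\end{array}\right)^{\sim}. \]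
   Context: The Minkowski metric matrix of order $k$ is $\left(\begin{array}{cc}1&0\\0&-I_{k-1}\end{array}\right)$; the Minkowski adjoint of $M\in\mathbb{C}^{p\times q}$ is $M^{\sim}=G_qM^*G_p$ with $G_q,G_p$ the Minkowski metric matrices of orders $q$ and $p$. The Minkowski inverse $A^{\mathfrak{m}}$ is the unique $X$ with $AXA=A$, $XAX=X$, $(AX)^{\sim}=AX$, $(XA)^{\sim}=XA$. *)

(* Complex field rendered as an arbitrary numClosedFieldType C
   (with conjugation Num.conj), e.g. complex numbers R[i]. *)
From HB Require Import structures.
From mathcomp Require Import all_boot all_order all_algebra.
Set Implicit Arguments. Unset Strict Implicit. Unset Printing Implicit Defensive.
Import Order.TTheory GRing.Theory Num.Theory.
Local Open Scope ring_scope.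

Definition mink_metric (C : numClosedFieldType) (k : nat) : 'M[C]_k :=
  \matrix_(i < k, j < k)
    (if i == j then (if (i : nat) == 0%N then 1 else -1) else 0).

Definition conjtr (C : numClosedFieldType) (p q : nat) (M : 'M[C]_(p, q))
  : 'M[C]_(q, p) := map_mx Num.conj (M^T).

Definition mink_adj (C : numClosedFieldType) (p q : nat) (M : 'M[C]_(p, q))
  : 'M[C]_(q, p) := mink_metric C q *m conjtr M *m mink_metric C p.

Definition is_mink_inverse (C : numClosedFieldType) (p q : nat)
  (A : 'M[C]_(p, q)) (X : 'M[C]_(q, p)) : Prop :=
  [/\ A *m X *m A = A, X *m A *m X = X,
      mink_adj (A *m X) = A *m X & mink_adj (X *m A) = X *m A].

(* Since A1 is nonsingular and rank A = r, the rows of A are combinations of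
   the rows of [A1 A2], which yields the full-rank factorization
   A = B A1^-1 G with B = [A1; A3] and G = [A1 A2].  The rank hypotheses on
   A A~ and A~ A force the r x r matrices G G~ and B~ B to be nonsingular, and
   then X = G~ (B~ A G~)^-1 B~ gives AX = B (B~ B)^-1 B~ and
   XA = G~ (G G~)^-1 G.  Both are Minkowski-selfadjoint, and X is a reflexive
   inverse of A, so X is the Minkowski inverse, which is unique. *)
From HB Require Import structures.
From mathcomp Require Import all_boot all_order all_algebra.
Set Implicit Arguments. Unset Strict Implicit. Unset Printing Implicit Defensive.
Import Order.TTheory GRing.Theory Num.Theory.
Local Open Scope ring_scope.

Lemma mulmx1_invmx (F : comUnitRingType) n (P Q : 'M[F]_n) :
  P *m Q = 1%:M -> invmx P = Q.
Proof.
by move=> PQ1; have [uP _] := mulmx1_unit PQ1; rewrite -[LHS]mulmx1 -PQ1 mulKmx.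
Qed.

Lemma unitmx_rank_sandwich (F : fieldType) p q r
    (P : 'M[F]_(p, r)) (N : 'M[F]_r) (Q : 'M[F]_(r, q)) :
  \rank (P *m N *m Q) = r -> N \in unitmx.
Proof.
move=> rPNQ; rewrite -row_free_unit /row_free eqn_leq rank_leq_row /= -{1}rPNQ.
exact: leq_trans (mxrankM_maxl _ _) (mxrankM_maxr _ _).
Qed.

Lemma block_mx_rank_factor (F : fieldType) r m' n'
    (A1 : 'M[F]_r) (A2 : 'M[F]_(r, n')) (A3 : 'M[F]_(m', r)) (A4 : 'M[F]_(m', n')) :
  A1 \in unitmx -> \rank (block_mx A1 A2 A3 A4) = r ->
  block_mx A1 A2 A3 A4 = col_mx A1 A3 *m invmx A1 *m row_mx A1 A2.
Proof.
set A := block_mx _ _ _ _; move=> uA1 rA.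
have rA12 : \rank (row_mx A1 A2) = r.
  apply/eqP; rewrite eqn_leq rank_leq_row /=.
  apply: leq_trans (mxrankM_maxl _ (col_mx 1%:M 0)).
  by rewrite mul_row_col mulmx1 mulmx0 addr0 mxrank_unit.
have sub12A : (row_mx A1 A2 <= A)%MS by rewrite /A block_mxEv -addsmxE addsmxSl.
have /submxP[D defA] : (A <= row_mx A1 A2)%MS.
  by have := mxrank_leqif_sup sub12A; rewrite rA rA12 => /geq_leqif; rewrite leqnn.
have defA13 : col_mx A1 A3 = D *m A1.
  by move: defA; rewrite /A block_mxEh mul_mx_row => /eq_row_mx[].
by rewrite defA defA13 mulmxK.
Qed.

Section ReflexiveInverseOfFactorization.
Variables (F : fieldType) (m n r : nat).
Variables (B : 'M[F]_(m, r)) (V : 'M[F]_(r, m)).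
Variables (G : 'M[F]_(r, n)) (U : 'M[F]_(n, r)) (W : 'M[F]_r).
Hypotheses (uW : W \in unitmx) (uVB : V *m B \in unitmx) (uGU : G *m U \in unitmx).

Let A := B *m invmx W *m G.
Let Y := U *m invmx (V *m A *m U) *m V.

Lemma invmx_factor_compress :
  invmx (V *m A *m U) = invmx (G *m U) *m W *m invmx (V *m B).
Proof.
apply: mulmx1_invmx.
have -> : V *m A *m U *m (invmx (G *m U) *m W *m invmx (V *m B))
    = V *m B *m invmx W *m (G *m U *m invmx (G *m U)) *m W *m invmx (V *m B).
  by rewrite /A !mulmxA.
by rewrite mulmxV // mulmx1 mulmxKV // mulmxV.
Qed.

Lemma mulmx_factor_rinv : A *m Y = B *m invmx (V *m B) *m V.
Proof.
rewrite /Y invmx_factor_compress.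
have -> : A *m (U *m (invmx (G *m U) *m W *m invmx (V *m B)) *m V)
    = B *m invmx W *m (G *m U *m invmx (G *m U)) *m W *m invmx (V *m B) *m V.
  by rewrite /A !mulmxA.
by rewrite mulmxV // mulmx1 mulmxKV.
Qed.

Lemma mulmx_factor_linv : Y *m A = U *m invmx (G *m U) *m G.
Proof.
rewrite /Y invmx_factor_compress.
have -> : U *m (invmx (G *m U) *m W *m invmx (V *m B)) *m V *m A
    = U *m invmx (G *m U) *m W *m (invmx (V *m B) *m (V *m B)) *m invmx W *m G.
  by rewrite /A !mulmxA.
by rewrite mulVmx // mulmx1 mulmxK.
Qed.

Lemma factor_rinv_reflexive : A *m Y *m A = A.
Proof.
rewrite mulmx_factor_rinv.
have -> : B *m invmx (V *m B) *m V *m A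
    = B *m (invmx (V *m B) *m (V *m B)) *m invmx W *m G by rewrite /A !mulmxA.
by rewrite mulVmx // mulmx1.
Qed.

Lemma factor_linv_reflexive : Y *m A *m Y = Y.
Proof.
rewrite mulmx_factor_linv /Y invmx_factor_compress.
rewrite -[U *m invmx (G *m U) *m G *m _]mulmxA !mulmxA.
by rewrite -[_ *m G *m U]mulmxA mulmxKV.
Qed.

End ReflexiveInverseOfFactorization.

Section MinkowskiAdjoint.
Variable C : numClosedFieldType.

Lemma trmx_mink_metric k : (mink_metric C k)^T = mink_metric C k.
Proof. by apply/matrixP=> i j; rewrite !mxE eq_sym; case: eqP => // ->. Qed.

Lemma conj_mink_metric k : map_mx Num.conj (mink_metric C k) = mink_metric C k.
Proof.
apply/matrixP=> i j; rewrite !mxE.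
by case: (i == j); case: ((i : nat) == 0%N); rewrite ?rmorphN ?rmorph1 ?rmorph0.
Qed.

Lemma mink_metricK k : mink_metric C k *m mink_metric C k = 1%:M.
Proof.
have -> : mink_metric C k
    = diag_mx (\row_(i < k) (if (i : nat) == 0%N then 1 else -1 : C)).
  by apply/matrixP=> i j; rewrite !mxE eq_sym; case: eqP => // ->.
rewrite mul_diag_mx; apply/matrixP=> i j; rewrite !mxE.
case: (i == j); last by rewrite mulr0.
by case: ((i : nat) == 0%N); rewrite ?mulr1 ?mulrNN ?mulr1.
Qed.

Lemma mink_adjM p q s (M : 'M[C]_(p, q)) (N : 'M[C]_(q, s)) :
  mink_adj (M *m N) = mink_adj N *m mink_adj M.
Proof.
rewrite /mink_adj /conjtr trmx_mul (map_mxM Num.conj).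
by rewrite !mulmxA -[_ *m mink_metric C q *m mink_metric C q]mulmxA
  mink_metricK mulmx1.
Qed.

Lemma mink_adjK p q (M : 'M[C]_(p, q)) : mink_adj (mink_adj M) = M.
Proof.
rewrite /mink_adj /conjtr !trmx_mul !(map_mxM Num.conj).
rewrite !trmx_mink_metric !conj_mink_metric map_trmx trmxK.
have -> : map_mx Num.conj (map_mx Num.conj M) = M.
  by apply/matrixP=> i j; rewrite !mxE conjCK.
by rewrite !mulmxA mink_metricK mul1mx -mulmxA mink_metricK mulmx1.
Qed.

Lemma mink_adj1 k : mink_adj (1%:M : 'M[C]_k) = 1%:M.
Proof. by rewrite /mink_adj /conjtr trmx1 (map_mx1 Num.conj) mulmx1 mink_metricK. Qed.

Lemma mink_adjV k (M : 'M[C]_k) :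
  M \in unitmx -> mink_adj (invmx M) = invmx (mink_adj M).
Proof.
move=> uM; apply/esym/mulmx1_invmx/mulmx1C.
by rewrite -mink_adjM mulmxV // mink_adj1.
Qed.

Lemma mink_adj_proj p r (M : 'M[C]_(p, r)) :
  mink_adj M *m M \in unitmx ->
  mink_adj (M *m invmx (mink_adj M *m M) *m mink_adj M)
  = M *m invmx (mink_adj M *m M) *m mink_adj M.
Proof.
move=> uMM; rewrite mink_adjM [mink_adj (M *m _)]mink_adjM mink_adjV //.
by rewrite mink_adjM !mink_adjK mulmxA.
Qed.

Lemma mink_inverse_uniq p q (A : 'M[C]_(p, q)) X Z :
  is_mink_inverse A X -> is_mink_inverse A Z -> X = Z.
Proof.
case=> AXA XAX AX_sa XA_sa [AZA ZAZ AZ_sa ZA_sa].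
have adjA_AZ : mink_adj A = mink_adj A *m A *m Z.
  by rewrite -{1}AZA mink_adjM AZ_sa mulmxA.
have adjA_XA : mink_adj A = X *m A *m mink_adj A.
  by rewrite -{1}AXA -mulmxA mink_adjM XA_sa.
have eX : X = X *m A *m Z.
  rewrite -{1}XAX -mulmxA -AX_sa mink_adjM adjA_AZ.
  rewrite [mink_adj X *m _]mulmxA [mink_adj X *m _]mulmxA -mink_adjM AX_sa.
  by rewrite AXA mulmxA.
have eZ : Z = X *m A *m Z.
  rewrite -{1}ZAZ -ZA_sa mink_adjM adjA_XA.
  by rewrite -[X *m A *m _ *m _]mulmxA -mink_adjM ZA_sa -mulmxA ZAZ.
by rewrite eX -eZ.
Qed.

End MinkowskiAdjoint.

Theorem theorem8p5 (C : numClosedFieldType) (r m' n' : nat)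
  (A1 : 'M[C]_r) (A2 : 'M[C]_(r, n')) (A3 : 'M[C]_(m', r)) (A4 : 'M[C]_(m', n')) :
  let A := block_mx A1 A2 A3 A4 in
  \rank A = r ->
  \rank (A *m mink_adj A) = r ->
  \rank (mink_adj A *m A) = r ->
  A1 \in unitmx ->
  forall X : 'M[C]_(r + n', r + m'),
    is_mink_inverse A X <->
    X = mink_adj (row_mx A1 A2)
        *m invmx (mink_adj (col_mx A1 A3) *m A *m mink_adj (row_mx A1 A2))
        *m mink_adj (col_mx A1 A3).
Proof.
move=> A rA rAA' rA'A uA1 X.
set B := col_mx A1 A3; set G := row_mx A1 A2.
have defA : A = B *m invmx A1 *m G := block_mx_rank_factor uA1 rA.
have uB'B : mink_adj B *m B \in unitmx.
  apply: (unitmx_rank_sandwich (P := mink_adj G *m mink_adj (invmx A1))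
    (Q := invmx A1 *m G)).
  by rewrite -[RHS]rA'A defA !mink_adjM !mulmxA.
have uGG' : G *m mink_adj G \in unitmx.
  apply: (unitmx_rank_sandwich (P := B *m invmx A1)
    (Q := mink_adj (invmx A1) *m mink_adj B)).
  by rewrite -[RHS]rAA' defA !mink_adjM !mulmxA.
set Y := _ *m _ *m mink_adj B.
have AY : A *m Y = B *m invmx (mink_adj B *m B) *m mink_adj B.
  by rewrite /Y defA mulmx_factor_rinv.
have YA : Y *m A = mink_adj G
    *m invmx (mink_adj (mink_adj G) *m mink_adj G) *m mink_adj (mink_adj G).
  by rewrite mink_adjK /Y defA mulmx_factor_linv.
have AYA : A *m Y *m A = A by rewrite /Y defA factor_rinv_reflexive.
have YAY : Y *m A *m Y = Y by rewrite /Y defA factor_linv_reflexive.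
have mink_inverse_Y : is_mink_inverse A Y.
  by split=> //; rewrite ?AY ?YA mink_adj_proj // mink_adjK.
by split=> [/mink_inverse_uniq/(_ mink_inverse_Y) | ->].
Qed.
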